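(* Let $\boldsymbol\Sigma$ be a stacky fan with fan $\Sigma$, and let $\sigma\in\Sigma$. Then, as subsets of $X(\widetilde\Sigma)$, $\widetilde L_\sigma=\mathbb{V}(\widetilde I_\sigma)\cap X(\widetilde\Sigma)$.
   Context: Work over $\mathbb{C}$. A stacky fan $\boldsymbol\Sigma=(N,\Sigma,(v_1,\dots,v_n))$ consists of a finitely generated abelian group $N$, a fan $\Sigma$ in $N_{\mathbb{R}}$ with rays $\rho_1,\dots,\rho_n$ spanning $N_{\mathbb{R}}$, and $v_i\in N$ with image on $\rho_i$. Let $\bar N=N/\mathrm{torsion}$ and $X(\Sigma)$ the toric variety of $\Sigma$; for a cone $\sigma$, $V(\sigma)$ is the closure of the torus orbit of the distinguished point $\gamma_\sigma$. With $x^{\hat\sigma}=\prod_{\rho_i\notin\sigma(1)}x_i$ and $Z_\Sigma=\mathbb{V}(x^{\hat\sigma}:\sigma\in\Sigma)\subset\mathbb{A}^n$, the Cox space is $X(\widetilde\Sigma)=\mathbb{A}^n\smallsetminus Z_\Sigma$, and $q:X(\widetilde\Sigma)\to X(\Sigma)$ is the toric morphism induced by $\mathbb{Z}^n\to\bar N$, $e_i\mapsto$ image of $v_i$ (a good quotient for the group $G_{\boldsymbol\Sigma}$). Define $\widetilde L_\sigma=q^{-1}(V(\sigma))$. For a cone $\mu\in\Sigma$ containing $\sigma$, let $\widetilde I_{\mu,\sigma}\subset\mathbb{C}[x_1,\dots,x_n]$ be the ideal generated by the monomials $x^{\hat\tau}_\mu=\prod_{\rho_i\in\mu(1)\smallsetminus\tau(1)}x_i$,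 where $\tau$ runs over all proper faces of $\mu$ not containing $\sigma$. Let $\widetilde I_\sigma=\bigcap_{\mu\in\Sigma,\ \mu\supseteq\sigma}\widetilde I_{\mu,\sigma}$. *)

(* N-bar = Z^d (lattice points are {ffun 'I_d -> int}), M = its dual (same type,
   paired by the dot product), N_R = R^d with R the Stdlib reals (a realType via
   Rstruct), the base field is C = R[i] (mathcomp-real-closed), polynomial ring
   C[x_1..x_n] = {mpoly CC[n]} (multinomials). *)
From mathcomp Require Import all_boot all_algebra.
From mathcomp Require Import Rstruct.
From mathcomp Require Import complex.
From mathcomp Require Import mpoly.
Set Implicit Arguments.
Unset Strict Implicit.
Unset Printing Implicit Defensive.
Import GRing.Theory Num.Theory.
Local Open Scope ring_scope.

Definition RR := Rdefinitions.R.
Definition CCC := (Rdefinitions.R)[i].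

Section Toric.
Variables (d n : nat).

Definition lat := {ffun 'I_d -> int}.
Definition ipair (m u : lat) : int := \sum_(k < d) m k * u k.
Definition rpair (m u : 'I_d -> RR) : RR := \sum_(k < d) m k * u k.

Variable b : 'I_n -> lat. (* images in N-bar of the v_i; rho_i = R_{>=0} b_i *)

Definition breal (i : 'I_n) : 'I_d -> RR := fun k => (b i k)%:~R.

Definition coneR (S : {set 'I_n}) (u : 'I_d -> RR) : Prop :=
  exists lam : 'I_n -> RR,
    (forall i, 0 <= lam i) /\ (forall i, i \notin S -> lam i = 0) /\
    forall k, u k = \sum_(i < n) lam i * breal i k.

Definition faceR (tau sigma : ('I_d -> RR) -> Prop) : Prop :=
  exists m : 'I_d -> RR, (forall u, sigma u -> 0 <= rpair m u) /\
    forall u, tau u <-> (sigma u /\ rpair m u = 0).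

(* Sig : a fan in N_R whose cones are described by the sets of indices of
   their rays; rho_1..rho_n are its rays and they span N_R. *)
Definition is_fan (Sig : {set {set 'I_n}}) : Prop :=
  (forall i, b i != 0) /\
  (forall i, [set i] \in Sig) /\
  (forall S, S \in Sig -> forall j, coneR S (breal j) <-> j \in S) /\
  (forall S, S \in Sig -> forall u, coneR S u -> coneR S (fun k => - u k) ->
             forall k, u k = 0) /\
  (forall S, S \in Sig -> forall F, faceR F (coneR S) ->
             exists2 S', S' \in Sig & forall u, coneR S' u <-> F u) /\
  (forall S S', S \in Sig -> S' \in Sig ->
      faceR (fun u => coneR S u /\ coneR S' u) (coneR S) /\
      faceR (fun u => coneR S u /\ coneR S' u) (coneR S')) /\
  (forall u : 'I_d -> RR, exists lam : 'I_n -> RR,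
      forall k, u k = \sum_(i < n) lam i * breal i k).

Variable Sig : {set {set 'I_n}}.

Definition dualM (S : {set 'I_n}) (m : lat) : Prop := forall i, i \in S -> 0 <= ipair m (b i).
Definition perpM (S : {set 'I_n}) (m : lat) : bool := [forall i in S, ipair m (b i) == 0].

(* points of the affine chart U_sigma = Hom_monoid(sigma^vee \cap M, (C, * )) *)
Definition chart_pt (S : {set 'I_n}) (g : lat -> CCC) : Prop :=
  [/\ S \in Sig, g 0 = 1 &
      forall m m', dualM S m -> dualM S m' -> g (m + m') = g m * g m'].

(* a point of X(Sig) is represented by a cone S of Sig and a point of U_S;
   two representatives give the same point of X(Sig) iff they come from a
   common point of U_(S \cap S') (the gluing along U_S \cap U_S' = U_(S\cap S')). *)
Definition same_pt (S : {set 'I_n}) (g : lat -> CCC) (S' : {set 'I_n}) (g' : lat -> CCC) : Prop :=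
  exists g'', [/\ chart_pt (S :&: S') g'',
                  (forall m, dualM S m -> g m = g'' m) &
                  (forall m, dualM S' m -> g' m = g'' m)].

(* regular functions on U_S: finite C-linear combinations of characters chi^m, m in S^vee \cap M *)
Definition regular (S : {set 'I_n}) (f : seq (CCC * lat)) : Prop :=
  forall c, c \in f -> dualM S c.2.
Definition evalf (f : seq (CCC * lat)) (g : lat -> CCC) : CCC :=
  \sum_(c <- f) c.1 * g c.2.

Definition chi (t : 'I_d -> CCC) (m : lat) : CCC := \prod_(k < d) t k ^ m k.

Definition gamma (S : {set 'I_n}) (m : lat) : CCC := if perpM S m then 1 else 0.

Definition orbit_pt (S : {set 'I_n}) (t : 'I_d -> CCC) (m : lat) : CCC := chi t m * gamma S m.

(* V(sigma): Zariski closure in X(Sig) of the orbit T . gamma_sigma.  The point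
   (P,gp) is in the closure iff every basic open neighbourhood D(f) of it
   (f regular on a chart U_S containing the point) meets the orbit. *)
Definition inV (sigma : {set 'I_n}) (P : {set 'I_n}) (gp : lat -> CCC) : Prop :=
  chart_pt P gp /\
  forall S g, chart_pt S g -> same_pt S g P gp ->
    forall f, regular S f -> evalf f g != 0 ->
      exists t : 'I_d -> CCC, (forall k, t k != 0) /\
        exists ga, [/\ chart_pt S ga, same_pt S ga sigma (orbit_pt sigma t) &
                       evalf f ga != 0].

(* the monomials x^{sigma-hat} and Z_Sigma, X(Sigma-tilde) = A^n \ Z_Sigma *)
Definition xhat (S : {set 'I_n}) : {mpoly CCC[n]} := \prod_(i < n | i \notin S) 'X_i.
Definition inXtilde (x : 'I_n -> CCC) : Prop :=
  ~ (forall S, S \in Sig -> (xhat S).@[x] = 0).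

(* the toric morphism q : X(Sigma-tilde) -> X(Sigma) induced by e_i |-> b_i, in the
   chart U_S (valid when x_i <> 0 for all i notin S): chi^m |-> prod_i x_i^<m,b_i> *)
Definition qcoord (x : 'I_n -> CCC) (m : lat) : CCC := \prod_(i < n) x i ^ ipair m (b i).

Definition inLtilde (sigma : {set 'I_n}) (x : 'I_n -> CCC) : Prop :=
  exists2 S, S \in Sig & (forall i, i \notin S -> x i != 0) /\ inV sigma S (qcoord x).

Definition xhat_rel (mu tau : {set 'I_n}) : {mpoly CCC[n]} := \prod_(i < n | i \in mu :\: tau) 'X_i.

Definition Igen_index (mu sigma tau : {set 'I_n}) : Prop :=
  [/\ tau \in Sig, faceR (coneR tau) (coneR mu), ~ (forall u, coneR tau u <-> coneR mu u) &
      ~ (forall u, coneR sigma u -> coneR tau u)].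

Definition in_Imu (mu sigma : {set 'I_n}) (p : {mpoly CCC[n]}) : Prop :=
  exists a : {set 'I_n} -> {mpoly CCC[n]},
    (forall tau, ~ Igen_index mu sigma tau -> a tau = 0) /\
    (p = \sum_(tau : {set 'I_n}) (a tau * xhat_rel mu tau)).

Definition in_Itilde (sigma : {set 'I_n}) (p : {mpoly CCC[n]}) : Prop :=
  forall mu, mu \in Sig -> (forall u, coneR sigma u -> coneR mu u) -> in_Imu mu sigma p.

Definition in_VItilde (sigma : {set 'I_n}) (x : 'I_n -> CCC) : Prop :=
  forall p, in_Itilde sigma p -> p.@[x] = 0.

End Toric.

(* Let Z be the set of indices i with x_i = 0.  As x lies in the Cox space, Z
   is contained in some cone of Sig, and since Sig is closed under intersection
   there is a smallest such cone tau.  Both sides then amount to sigma <= tau: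
   - The generators of I_(tau,sigma) are the x_tau^T for faces T of tau not
     containing sigma; if sigma <= tau each such T misses a point of Z, so all
     of them vanish at x.  If not, the monomial prod_(x_i <> 0) x_i lies in
     every I_(mu,sigma), being a multiple of x_mu^(tau /\ mu).
   - If sigma is not <= tau, a character of sigma^vee vanishing on tau /\ sigma
     and positive on a ray of sigma outside tau is a unit near q(x) but
     vanishes on the orbit of gamma_sigma, so q(x) is not in V(sigma).  If
     sigma <= tau, replacing the zero coordinates of x by s <> 0 gives a curve
     in that orbit tending to q(x), along which every regular function near
     q(x) is a polynomial in s, nonzero at s = 0.
   The separating characters come from the real separating functionals of
   the fan axioms by rational approximation. *)

From mathcomp Require Import all_boot all_algebra.
From mathcomp Require Import Rstruct complex mpoly.
From mathcomp Require Import order ring lra.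
Import Order.TTheory GRing.Theory Num.Theory.
Local Open Scope ring_scope.

Lemma floor_dist_le1 (R : archiRealFieldType) (y : R) : `|(Num.floor y)%:~R - y| <= 1.
Proof.
have := floor_itv y; rewrite intrD ler_distl => /andP[lo hi].
by apply/andP; split; lra.
Qed.

(* Rounding [N u] coordinatewise, for [N] large, keeps the finitely many
   strict inequalities. *)
Lemma rat_comb_pos (R : archiRealFieldType) (r m : nat) (K : 'M[rat]_(r, m))
    (u : 'rV[R]_r) (P : {set 'I_m}) :
  (forall j, j \in P -> 0 < (u *m map_mx ratr K) 0 j) ->
  exists z : 'rV[rat]_r, forall j, j \in P -> 0 < (z *m K) 0 j.
Proof.
move=> uK_gt0.
pose C j := \sum_l `|ratr (K l j) : R|.
pose N := (\sum_(j in P) Num.bound (C j / (u *m map_mx ratr K) 0 j)%R)%N.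
have C_lt j : j \in P -> C j < N%:R * (u *m map_mx ratr K) 0 j.
  move=> jP; rewrite -ltr_pdivrMr ?uK_gt0 //.
  apply: lt_le_trans (archi_boundP _) _.
    by rewrite divr_ge0 ?sumr_ge0 // ltW ?uK_gt0.
  by rewrite ler_nat /N (bigD1 j) //= leq_addr.
pose z l := Num.floor (N%:R * u 0 l).
exists (\row_l (z l)%:~R) => j jP; rewrite -(ltr0q R) !mxE rmorph_sum.
have round_err : - C j <= \sum_l ((z l)%:~R - N%:R * u 0 l) * ratr (K l j).
  rewrite -sumrN; apply: ler_sum => l _; apply: lerNnormlW.
  by rewrite normrM ler_piMl ?floor_dist_le1.
have -> : \sum_l ratr ((\row_l (z l)%:~R) 0 l * K l j) =
    \sum_l ((z l)%:~R - N%:R * u 0 l) * ratr (K l j) +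
    N%:R * (u *m map_mx ratr K) 0 j.
  rewrite !mxE mulr_sumr -big_split /=; apply: eq_bigr => l _.
  by rewrite !mxE rmorphM /= ratr_int; ring.
by have := C_lt j jP; lra.
Qed.

Lemma clear_denominators {d : nat} (v : 'I_d -> rat) :
  exists2 D : int, 0 < D & exists m : lat d, forall k, (m k)%:~R = D%:~R * v k.
Proof.
exists (\prod_k denq (v k)); first by apply: prodr_gt0 => k _; exact: denq_gt0.
exists [ffun k => (\prod_(l | l != k) denq (v l)) * numq (v k)] => k.
by rewrite ffunE [X in _ = X%:~R * _](bigD1 k) //= !intrM numqE; ring.
Qed.

Lemma poly_nonzero_nonroot (R : numDomainType) (P : {poly R}) :
  P != 0 -> exists2 s : R, s != 0 & P.[s] != 0.
Proof.
move=> P_neq0; pose rs := [seq i.+1%:R : R | i <- iota 0 (size P)].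
have rs_uniq : uniq rs.
  by rewrite map_inj_uniq ?iota_uniq // => i j /eqP; rewrite eqr_nat eqSS => /eqP.
have /allPn[_ /mapP[i _ ->] nonroot] : ~~ all (root P) rs.
  apply/negP => all_roots; have := max_poly_roots P_neq0 all_roots rs_uniq.
  by rewrite size_map size_iota ltnn.
by exists i.+1%:R; rewrite ?pnatr_eq0.
Qed.

Lemma prodrXz (R : fieldType) (I : finType) (F : I -> R) (z : int) :
  (forall i, F i != 0) -> (\prod_i F i) ^ z = \prod_i F i ^ z.
Proof.
move=> F_neq0; have : \prod_i F i != 0 by apply/prodf_neq0 => i _.
apply: (big_ind2 (fun a c => a != 0 -> a ^ z = c)) => //; first by rewrite exp1rz.
move=> a1 c1 a2 c2 IH1 IH2; rewrite mulf_eq0 negb_or => /andP[a1_neq0 a2_neq0].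
by rewrite exprzMl ?unitfE // IH1 ?IH2.
Qed.

Section IntegralSeparation.
Context {d n : nat} {b : 'I_n -> lat d}.

(* The functionals vanishing on [E] form a rational subspace, spanned by the
   rows of [kermx BE]; a real point of it positive on [P] has a rational, then
   integral, neighbour with the same property. *)
Lemma integral_separation {E P : {set 'I_n}} {m0 : 'I_d -> RR} :
  (forall i, i \in E -> rpair m0 (breal b i) = 0) ->
  (forall i, i \in P -> 0 < rpair m0 (breal b i)) ->
  exists m : lat d, (forall i, i \in E -> ipair m (b i) = 0) /\
                    (forall i, i \in P -> 0 < ipair m (b i)).
Proof.
move=> m0E m0P.
pose B : 'M[rat]_(d, n) := \matrix_(k, i) (b i k)%:~R.
pose BE : 'M[rat]_(d, n) := \matrix_(k, i) (if i \in E then (b i k)%:~R else 0).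
pose m0r : 'rV[RR]_d := \row_k m0 k.
have rpairE i : rpair m0 (breal b i) = (m0r *m map_mx ratr B) 0 i.
  by rewrite !mxE; apply: eq_bigr => k _; rewrite !mxE ratr_int.
have m0_ker : m0r *m map_mx ratr BE = 0.
  apply/rowP => i; rewrite !mxE; case: (boolP (i \in E)) => iE.
    by rewrite -[RHS](m0E i iE); apply: eq_bigr => k _; rewrite !mxE iE ratr_int.
  by rewrite big1 // => k _; rewrite !mxE (negbTE iE) rmorph0 mulr0.
have /submxP[u m0u] : (m0r <= map_mx ratr (kermx BE))%MS.
  by rewrite map_kermx; apply/sub_kermxP.
have [|z zP] := @rat_comb_pos _ _ _ (kermx BE *m B) u P.
  by move=> i iP; rewrite map_mxM mulmxA -m0u -rpairE m0P.
pose m' := z *m kermx BE.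
have m'E i : i \in E -> (m' *m B) 0 i = 0.
  move=> iE; have : (m' *m BE) 0 i = 0 by rewrite -mulmxA mulmx_ker mulmx0 mxE.
  by move=> <-; rewrite !mxE; apply: eq_bigr => k _; rewrite !mxE iE.
have [D D_gt0 [m mD]] := clear_denominators (fun k => m' 0 k).
have ipairE i : (ipair m (b i))%:~R = D%:~R * (m' *m B) 0 i :> rat.
  rewrite rmorph_sum !mxE mulr_sumr; apply: eq_bigr => k _.
  by rewrite rmorphM /= mD !mxE mulrA.
exists m; split=> [i iE|i iP].
  by apply/eqP; rewrite -(intr_eq0 rat) ipairE m'E ?mulr0.
by rewrite -(ltr0z rat) ipairE mulr_gt0 ?ltr0z // -mulmxA zP.
Qed.

End IntegralSeparation.

Section Pairing.
Context {d : nat}.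

Lemma ipairD (m m' v : lat d) : ipair (m + m') v = ipair m v + ipair m' v.
Proof. by rewrite /ipair -big_split; apply: eq_bigr => k _; rewrite ffunE mulrDl. Qed.

Lemma ipairN (m v : lat d) : ipair (- m) v = - ipair m v.
Proof. by rewrite /ipair -sumrN; apply: eq_bigr => k _; rewrite ffunE mulNr. Qed.

Lemma ipair0 (v : lat d) : ipair 0 v = 0.
Proof. by rewrite /ipair big1 // => k _; rewrite ffunE mul0r. Qed.

Lemma rpair_int (m v : lat d) :
  rpair (fun k => (m k)%:~R) (fun k => (v k)%:~R) = (ipair m v)%:~R.
Proof. by rewrite /rpair /ipair rmorph_sum; apply: eq_bigr => k _; rewrite rmorphM. Qed.

End Pairing.

Section Fan.
Context {d n : nat} {b : 'I_n -> lat d} {Sig : {set {set 'I_n}}}.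
Hypothesis Hfan : is_fan b Sig.

Lemma fan_ray {S : {set 'I_n}} (j : 'I_n) :
  S \in Sig -> coneR b S (breal b j) <-> j \in S.
Proof. by move=> SSig; case: Hfan => _ [_ [rays _]]; exact: rays. Qed.

Lemma coneR_subset {S T : {set 'I_n}} {u : 'I_d -> RR} :
  S \subset T -> coneR b S u -> coneR b T u.
Proof.
move=> ST [lam [lam_ge0 [lam_out uE]]]; exists lam; split=> //; split=> // i iT.
by apply: lam_out; apply: contra iT; exact: (subsetP ST).
Qed.

Lemma fan_cone_subset {S T : {set 'I_n}} : S \in Sig -> T \in Sig ->
  (forall u, coneR b S u -> coneR b T u) -> S \subset T.
Proof.
move=> SSig TSig ST; apply/subsetP => j jS.
by apply/(fan_ray j TSig)/ST/(fan_ray j SSig).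
Qed.

Lemma fan_setI {S T : {set 'I_n}} : S \in Sig -> T \in Sig ->
  S :&: T \in Sig /\ (forall u, coneR b (S :&: T) u <-> coneR b S u /\ coneR b T u).
Proof.
move=> SSig TSig; case: Hfan => _ [_ [_ [_ [faces [inter _]]]]].
have [ST_face _] := inter S T SSig TSig.
have [S' S'Sig S'E] := faces S SSig _ ST_face.
suff <- : S' = S :&: T by [].
apply/setP => j; rewrite inE; apply/idP/andP => [jS'|[jS jT]].
  have [jS jT] := proj1 (S'E _) (proj2 (fan_ray j S'Sig) jS').
  by split; [apply/(fan_ray j SSig) | apply/(fan_ray j TSig)].
by apply/(fan_ray j S'Sig)/S'E; split; [apply/(fan_ray j SSig) | apply/(fan_ray j TSig)].
Qed.

Lemma rpair_lincomb {lam : 'I_n -> RR} {u : 'I_d -> RR} :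
  (forall k, u k = \sum_i lam i * breal b i k) ->
  forall m, rpair m u = \sum_i lam i * rpair m (breal b i).
Proof.
move=> uE m; rewrite /rpair; under eq_bigr do rewrite uE big_distrr /=.
rewrite exchange_big /=; apply: eq_bigr => i _; rewrite big_distrr /=.
by apply: eq_bigr => k _; ring.
Qed.

Lemma fan_face_perp (S : {set 'I_n}) (m : lat d) : S \in Sig -> dualM b S m ->
  [set j in S | ipair m (b j) == 0] \in Sig.
Proof.
move=> SSig mS; case: Hfan => _ [_ [_ [_ [faces _]]]].
pose mR k : RR := (m k)%:~R.
have mRE j : rpair mR (breal b j) = (ipair m (b j))%:~R by exact: rpair_int.
pose F u := coneR b S u /\ rpair mR u = 0.
have F_face : faceR F (coneR b S).
  exists mR; split=> // u [lam [lam_ge0 [lam_out uE]]].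
  rewrite (rpair_lincomb uE); apply: sumr_ge0 => i _.
  case: (boolP (i \in S)) => iS; last by rewrite lam_out ?mul0r.
  by rewrite mulr_ge0 // mRE ler0z mS.
have [S' S'Sig S'E] := faces S SSig F F_face.
suff -> : [set j in S | ipair m (b j) == 0] = S' by [].
apply/setP => j; rewrite inE; apply/andP/idP => [[jS /eqP mj0]|jS'].
  by apply/(fan_ray j S'Sig)/S'E; split; [apply/(fan_ray j SSig) | rewrite mRE mj0].
have [jS mj0] := proj1 (S'E _) (proj2 (fan_ray j S'Sig) jS').
by split; [apply/(fan_ray j SSig) | rewrite -(intr_eq0 RR) -mRE mj0].
Qed.

Lemma fan_min_cone (Z : {set 'I_n}) : (exists2 S, S \in Sig & Z \subset S) ->
  exists tau, [/\ tau \in Sig, Z \subset tau &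
                  forall S, S \in Sig -> Z \subset S -> tau \subset S].
Proof.
case=> S0 S0Sig ZS0.
pose P S := (S \in Sig) && (Z \subset S).
have [|tau /andP[tauSig Ztau] tau_min] := @arg_minnP _ S0 P (fun S => #|S|).
  exact/andP.
exists tau; split=> // S SSig ZS.
have [tSSig _] := fan_setI tauSig SSig.
have := tau_min (tau :&: S); rewrite /P tSSig subsetI Ztau ZS => /(_ isT) le_tS.
have := (subset_leqif_card (subsetIl tau S)).2.
by rewrite eqn_leq le_tS subset_leq_card ?subsetIl // => /esym; rewrite subsetI subxx.
Qed.

(* The face of [S] cut out by [m] is a cone containing [Z], hence [tau]. *)
Lemma perp_min_cone {Z tau S : {set 'I_n}} {m : lat d} :
  (forall S, S \in Sig -> Z \subset S -> tau \subset S) ->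
  S \in Sig -> Z \subset S -> dualM b S m ->
  (forall i, i \in Z -> ipair m (b i) = 0) -> forall i, i \in tau -> ipair m (b i) = 0.
Proof.
move=> tau_min SSig ZS mS mZ i itau.
have : tau \subset [set j in S | ipair m (b j) == 0].
  apply: tau_min; first exact: fan_face_perp.
  by apply/subsetP => j jZ; rewrite inE (subsetP ZS) //= mZ.
by move/subsetP/(_ i itau); rewrite inE => /andP[_ /eqP].
Qed.

Lemma fan_separation {S T : {set 'I_n}} {j : 'I_n} :
  S \in Sig -> T \in Sig -> j \in S -> j \notin T ->
  exists m : lat d, [/\ dualM b S m, forall i, i \in S :&: T -> ipair m (b i) = 0
                      & 0 < ipair m (b j)].
Proof.
move=> SSig TSig jS jT; case: Hfan => _ [_ [_ [_ [_ [inter _]]]]].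
have [[m0 [m0_ge0 m0E]] _] := inter S T SSig TSig.
have m0E0 i : i \in S :&: T -> rpair m0 (breal b i) = 0.
  rewrite inE => /andP[iS iT].
  have iST : coneR b S (breal b i) /\ coneR b T (breal b i).
    by split; [apply/(fan_ray i SSig) | apply/(fan_ray i TSig)].
  by have [] := proj1 (m0E _) iST.
have m0P i : i \in S :\: T -> 0 < rpair m0 (breal b i).
  rewrite inE => /andP[iT iS]; have iSR := proj2 (fan_ray i SSig) iS.
  rewrite lt_def m0_ge0 // andbT; apply/eqP => m0i.
  by have [_ /(fan_ray i TSig)] := proj2 (m0E _) (conj iSR m0i); rewrite (negbTE iT).
have [m [mE mP]] := integral_separation m0E0 m0P.
exists m; split=> //; last by rewrite mP // inE jS jT.
move=> i iS; case: (boolP (i \in T)) => iT; first by rewrite mE // inE iS iT.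
by rewrite ltW // mP // inE iS iT.
Qed.

Lemma xhat_eval (S : {set 'I_n}) (x : 'I_n -> CCC) :
  (xhat S).@[x] = \prod_(i | i \notin S) x i.
Proof. by rewrite rmorph_prod; apply: eq_bigr => i _; exact: mevalXU. Qed.

Lemma Xtilde_min_cone {x : 'I_n -> CCC} : inXtilde Sig x ->
  exists tau, [/\ tau \in Sig, [set i | x i == 0] \subset tau &
    forall S, S \in Sig -> [set i | x i == 0] \subset S -> tau \subset S].
Proof.
move=> xX; apply: fan_min_cone.
have [S SSig xS] : exists2 S, S \in Sig & (xhat S).@[x] != 0.
  apply/exists_inP; apply: contraT => /exists_inPn xhat0; case: xX => S SSig.
  by apply/eqP; rewrite -[_ == 0]negbK xhat0.
exists S => //; apply/subsetP => i; rewrite inE => /eqP xi0.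
by apply: contraTT xS => iS; rewrite negbK xhat_eval (bigD1 i) //= xi0 mul0r.
Qed.

Lemma dualM_subset {A B : {set 'I_n}} {m : lat d} :
  A \subset B -> dualM b B m -> dualM b A m.
Proof. by move=> AB mB i iA; apply/mB/(subsetP AB). Qed.

Lemma chart_pt_subset {A B : {set 'I_n}} {g : lat d -> CCC} :
  A \subset B -> B \in Sig -> chart_pt b Sig A g -> chart_pt b Sig B g.
Proof.
move=> AB BSig [_ g0 gD]; split=> // m m' mB m'B.
by apply: gD; exact: (dualM_subset AB).
Qed.

(* Both [m] and [-m] are regular on U_(S :&: T), so [g m] is a unit. *)
Lemma chart_pt_setI_nonvanishing {S T : {set 'I_n}} {j : 'I_n} {g : lat d -> CCC} :
  S \in Sig -> T \in Sig -> j \in S -> j \notin T -> chart_pt b Sig (S :&: T) g ->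
  exists m : lat d, [/\ dualM b S m, 0 < ipair m (b j) & g m != 0].
Proof.
move=> SSig TSig jS jT [_ g0 gD].
have [m [mS mST mj]] := fan_separation SSig TSig jS jT.
have mST_dual : dualM b (S :&: T) m by move=> i /mST ->.
have NmST_dual : dualM b (S :&: T) (- m) by move=> i /mST mi; rewrite ipairN mi oppr0.
exists m; split=> //; apply: contra_eq_neq (gD _ _ mST_dual NmST_dual) => gm0.
by rewrite subrr g0 gm0 mul0r oner_neq0.
Qed.

Lemma chart_pt_qcoord {S : {set 'I_n}} {x : 'I_n -> CCC} : S \in Sig ->
  (forall i, i \notin S -> x i != 0) -> chart_pt b Sig S (qcoord b x).
Proof.
move=> SSig xS; split=> //.
  by rewrite /qcoord big1 // => i _; rewrite ipair0 expr0z.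
move=> m m' mS m'S; rewrite /qcoord -big_split /=; apply: eq_bigr => i _.
rewrite ipairD; case: (boolP (i \in S)) => iS; first by rewrite exprzD_ss ?mS ?m'S.
by rewrite expfzDr ?xS.
Qed.

Lemma chiD (t : 'I_d -> CCC) (m m' : lat d) : (forall k, t k != 0) ->
  chi t (m + m') = chi t m * chi t m'.
Proof.
by move=> t_neq0; rewrite /chi -big_split; apply: eq_bigr => k _; rewrite ffunE expfzDr.
Qed.

Lemma chi0 (t : 'I_d -> CCC) : chi t 0 = 1.
Proof. by rewrite /chi big1 // => k _; rewrite ffunE expr0z. Qed.

Lemma perpMD (S : {set 'I_n}) (m m' : lat d) : dualM b S m -> dualM b S m' ->
  perpM b S (m + m') = perpM b S m && perpM b S m'.
Proof.
move=> mS m'S; apply/forall_inP/andP => [mm'0|[/forall_inP m0 /forall_inP m'0] i iS].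
  by split; apply/forall_inP => i iS; have := mm'0 i iS;
    rewrite ipairD paddr_eq0 ?mS ?m'S // => /andP[].
by rewrite ipairD (eqP (m0 i iS)) (eqP (m'0 i iS)) addr0.
Qed.

Lemma chart_pt_orbit {S : {set 'I_n}} {t : 'I_d -> CCC} : S \in Sig ->
  (forall k, t k != 0) -> chart_pt b Sig S (orbit_pt b S t).
Proof.
move=> SSig t_neq0; split=> //.
  rewrite /orbit_pt chi0 mul1r /gamma ifT //.
  by apply/forall_inP => i _; rewrite ipair0.
move=> m m' mS m'S; rewrite /orbit_pt chiD // /gamma perpMD //.
by case: (perpM b S m); case: (perpM b S m'); rewrite /= ?mulr1 ?mulr0 ?mul0r //; ring.
Qed.

(* For [w] in the big torus of A^n, [qtorus w] is its image under [q]. *)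
Definition qtorus (w : 'I_n -> CCC) (k : 'I_d) : CCC := \prod_i w i ^ b i k.

Lemma chi_qtorus (w : 'I_n -> CCC) (m : lat d) : (forall i, w i != 0) ->
  chi (qtorus w) m = qcoord b w m.
Proof.
move=> w_neq0; rewrite /chi /qtorus /qcoord.
rewrite (eq_bigr (fun k => \prod_i (w i ^ b i k) ^ m k)); last first.
  by move=> k _; apply: prodrXz => i; exact: expfz_neq0.
under eq_bigr do under eq_bigr do rewrite exprz_exp.
rewrite exchange_big /=; apply: eq_bigr => i _.
rewrite -(big_morph _ (fun e1 e2 => expfzDr e1 e2 (w_neq0 i)) (expr0z _)).
by congr (_ ^ _); apply: eq_bigr => k _; rewrite mulrC.
Qed.

Lemma qcoord_vanish {x : 'I_n -> CCC} {m : lat d} {j : 'I_n} :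
  x j = 0 -> 0 < ipair m (b j) -> qcoord b x m = 0.
Proof.
by move=> xj0 mj; rewrite /qcoord (bigD1 j) //= xj0 exp0rz (gt_eqF mj) mul0r.
Qed.

Lemma gamma_pos {S : {set 'I_n}} {m : lat d} {j : 'I_n} :
  j \in S -> 0 < ipair m (b j) -> gamma b S m = 0.
Proof.
move=> jS mj; rewrite /gamma ifN //; apply/forall_inP => /(_ j jS)/eqP mj0.
by rewrite mj0 ltxx in mj.
Qed.

Definition fill_zeros (x : 'I_n -> CCC) (s : CCC) (i : 'I_n) : CCC :=
  if x i == 0 then s else x i.

Definition qcoord_poly (x : 'I_n -> CCC) (m : lat d) : {poly CCC} :=
  \prod_i (if x i == 0 then 'X^`|ipair m (b i)| else (x i ^ ipair m (b i))%:P).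

Lemma horner_qcoord_poly {S : {set 'I_n}} {x : 'I_n -> CCC} {m : lat d} (s : CCC) :
  [set i | x i == 0] \subset S -> dualM b S m ->
  (qcoord_poly x m).[s] = qcoord b (fill_zeros x s) m.
Proof.
move=> zerosS mS; rewrite horner_prod; apply: eq_bigr => i _; rewrite /fill_zeros.
case: ifP => [xi0|_]; last by rewrite hornerC.
have mi_ge0 : 0 <= ipair m (b i) by apply/mS/(subsetP zerosS); rewrite inE xi0.
by rewrite hornerXn -[in RHS](gez0_abs mi_ge0).
Qed.

Section MinCone.
Context {sigma : {set 'I_n}} {x : 'I_n -> CCC} {tau : {set 'I_n}}.
Hypothesis sigmaSig : sigma \in Sig.
Hypothesis tauSig : tau \in Sig.
Hypothesis zeros_tau : [set i | x i == 0] \subset tau.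
Hypothesis tau_min :
  forall S, S \in Sig -> [set i | x i == 0] \subset S -> tau \subset S.

Lemma nonzero_off_min_cone (i : 'I_n) : i \notin tau -> x i != 0.
Proof. by apply: contraNN => xi0; apply: (subsetP zeros_tau); rewrite inE. Qed.

Lemma chart_pt_qcoord_min_cone : chart_pt b Sig tau (qcoord b x).
Proof. exact: chart_pt_qcoord tauSig nonzero_off_min_cone. Qed.

Lemma Ltilde_sub_min_cone : inLtilde b Sig sigma x -> sigma \subset tau.
Proof.
case=> S0 S0Sig [x_off_S0 [_ qx_V]].
have zeros_S0 : [set i | x i == 0] \subset S0.
  by apply/subsetP => i; rewrite inE; apply: contraLR => /x_off_S0.
have same : same_pt b Sig tau (qcoord b x) S0 (qcoord b x).
  exists (qcoord b x); rewrite (setIidPl (tau_min _ S0Sig zeros_S0)).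
  by split=> //; exact: chart_pt_qcoord_min_cone.
have one_reg : regular b tau [:: (1, 0)].
  by move=> c; rewrite inE => /eqP -> i _; rewrite ipair0.
have one_eval : evalf [:: (1, 0)] (qcoord b x) != 0.
  have [_ qx0 _] := chart_pt_qcoord_min_cone.
  by rewrite /evalf big_seq1 /= mul1r qx0 oner_eq0.
have [t [_ [_ [_ [g [g_chart _ g_orbit] _]]]]] :=
  qx_V _ _ chart_pt_qcoord_min_cone same _ one_reg one_eval.
apply/subsetP => j js; apply: contraT => jt.
rewrite setIC in g_chart.
have [m [ms mj gm]] := chart_pt_setI_nonvanishing sigmaSig tauSig js jt g_chart.
by rewrite -g_orbit // /orbit_pt (gamma_pos js mj) mulr0 eqxx in gm.
Qed.

(* Every generator [x_tau^T] of [I_(tau, sigma)] has a factor [x_i] with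
   [x i = 0]: otherwise [T] would contain all zeros of [x], hence [tau]. *)
Lemma sub_min_cone_VItilde : sigma \subset tau -> in_VItilde b Sig sigma x.
Proof.
move=> sigma_tau p /(_ tau tauSig (fun u => coneR_subset sigma_tau)) [a [a0 ->]].
rewrite rmorph_sum big1 // => T _; rewrite rmorphM /=.
case: (boolP [exists i, (i \in tau :\: T) && (x i == 0)]) => [/existsP[i /andP[iT /eqP xi0]]|].
  by rewrite rmorph_prod (bigD1 i) //= mevalXU xi0 mul0r mulr0.
move=> /existsPn no_zero; rewrite a0 ?rmorph0 ?mul0r // => -[TSig _ _ not_sub].
apply: not_sub => u su.
apply: (coneR_subset (S := tau)); last exact: coneR_subset sigma_tau su.
apply/tau_min => //; apply/subsetP => i; rewrite inE => xi0.
apply: contraT => iT; move: (no_zero i).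
by rewrite inE iT xi0 (subsetP zeros_tau) ?inE.
Qed.

(* The monomial [prod_(x i != 0) X_i] lies in every [I_(mu, sigma)]: it is a
   multiple of [x_mu^(tau :&: mu)], and [tau :&: mu] is a proper face of [mu]
   not containing [sigma]. *)
Lemma VItilde_sub_min_cone : in_VItilde b Sig sigma x -> sigma \subset tau.
Proof.
move=> xV; apply/subsetP => j js; apply: contraT => jt.
pose p : {mpoly CCC[n]} := \prod_(i | x i != 0) 'X_i.
have p_neq0 : p.@[x] != 0.
  by rewrite rmorph_prod /=; apply/prodf_neq0 => i xi; rewrite mevalXU.
suff p0 : p.@[x] = 0 by rewrite p0 eqxx in p_neq0.
apply: xV => mu muSig sigma_mu.
have [tmuSig tmuE] := fan_setI tauSig muSig.
have sigma_tmu : ~ (forall u, coneR b sigma u -> coneR b (tau :&: mu) u).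
  move=> sigma_tmu; have /subsetP/(_ j js) := fan_cone_subset sigmaSig tauSig
    (fun u su => proj1 (proj1 (tmuE u) (sigma_tmu u su))).
  by rewrite (negbTE jt).
exists (fun T => if T == tau :&: mu then
  \prod_(i | (x i != 0) && (i \notin mu :\: (tau :&: mu))) 'X_i else 0); split.
  move=> T; case: eqP => // -> []; split=> //.
  - case: Hfan => _ [_ [_ [_ [_ [inter _]]]]].
    have [_ [m0 [m0_ge0 m0E]]] := inter tau mu tauSig muSig.
    by exists m0; split=> // u; rewrite tmuE.
  - by move=> mu_tmu; apply: sigma_tmu => u /sigma_mu/mu_tmu.
rewrite (bigD1 (tau :&: mu)) //= eqxx [X in _ + X]big1 ?addr0 => [|T T_neq]; last first.
  by rewrite ifN ?mul0r.
rewrite /p /xhat_rel (bigID (fun i => i \in mu :\: (tau :&: mu))) /= mulrC.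
congr (_ * _); apply: eq_bigl => i; case: (boolP (i \in _)); rewrite ?andbT ?andbF //.
by rewrite !inE => /andP[/nandP[/nonzero_off_min_cone|/negPf-> //]].
Qed.

Lemma zeros_subset_glued {S : {set 'I_n}} {g : lat d -> CCC} :
  S \in Sig -> chart_pt b Sig (tau :&: S) g ->
  (forall m, dualM b tau m -> qcoord b x m = g m) -> [set i | x i == 0] \subset S.
Proof.
move=> SSig g_chart qx_g; apply/subsetP => j; rewrite inE => /eqP xj0.
apply: contraT => jS; have jtau : j \in tau by apply/(subsetP zeros_tau); rewrite inE xj0.
have [m [mtau mj gm]] := chart_pt_setI_nonvanishing tauSig SSig jtau jS g_chart.
by rewrite -qx_g // (qcoord_vanish xj0 mj) eqxx in gm.
Qed.

(* A character not vanishing at [q x] is orthogonal to the zeros of [x], hence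
   to [tau] and to [sigma]. *)
Lemma gamma_qcoord {S : {set 'I_n}} {m : lat d} :
  S \in Sig -> [set i | x i == 0] \subset S -> sigma \subset tau -> dualM b S m ->
  gamma b sigma m * qcoord b x m = qcoord b x m.
Proof.
move=> SSig zeros_S sigma_tau mS.
have [->|qx_neq0] := eqVneq (qcoord b x m) 0; first by rewrite mulr0.
rewrite /gamma ifT ?mul1r //; apply/forall_inP => i isigma; apply/eqP.
apply: (perp_min_cone tau_min SSig zeros_S mS) (subsetP sigma_tau i isigma).
move=> k; rewrite inE => /eqP xk0.
have mk_ge0 : 0 <= ipair m (b k) by apply/mS/(subsetP zeros_S); rewrite inE xk0.
apply/eqP; rewrite eq_le mk_ge0 andbT leNgt; apply: contra qx_neq0 => mk_gt0.
by rewrite (qcoord_vanish xk0 mk_gt0).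
Qed.

(* Along the curve [s |-> q (fill_zeros x s)], which lies in the orbit of
   [gamma_sigma] for [s != 0] and tends to [q x], a regular function is a
   polynomial in [s] not vanishing at [0]. *)
Lemma sub_min_cone_Ltilde : sigma \subset tau -> inLtilde b Sig sigma x.
Proof.
move=> sigma_tau; exists tau => //; split; first exact: nonzero_off_min_cone.
split=> [|S g' g'_chart [g [g_chart g'_g qx_g]] f f_reg f_g'].
  exact: chart_pt_qcoord_min_cone.
have SSig : S \in Sig by case: g'_chart.
rewrite setIC in g_chart.
have zeros_S := zeros_subset_glued SSig g_chart qx_g.
have tau_S := tau_min _ SSig zeros_S.
have sigma_S := subset_trans sigma_tau tau_S.
pose P := \sum_(c <- f) (c.1 * gamma b sigma c.2) *: qcoord_poly x c.2.
have P_eval s : P.[s] =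
    \sum_(c <- f) c.1 * gamma b sigma c.2 * qcoord b (fill_zeros x s) c.2.
  rewrite horner_sum big_seq [RHS]big_seq; apply: eq_bigr => c cf.
  by rewrite hornerZ (horner_qcoord_poly s zeros_S (f_reg c cf)).
have P0 : P.[0] = evalf f g'.
  rewrite P_eval /evalf big_seq [RHS]big_seq; apply: eq_bigr => c cf.
  have -> : qcoord b (fill_zeros x 0) c.2 = qcoord b x c.2.
    by apply: eq_bigr => i _; rewrite /fill_zeros; case: eqP => [->|].
  have cS := f_reg c cf; have ctau := dualM_subset tau_S cS.
  by rewrite -mulrA (gamma_qcoord SSig zeros_S sigma_tau cS) qx_g // g'_g.
have [s s_neq0 Ps_neq0] : exists2 s, s != 0 & P.[s] != 0.
  apply: poly_nonzero_nonroot; apply: contra_neq f_g' => P_eq0.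
  by rewrite -P0 P_eq0 horner0.
have w_neq0 i : fill_zeros x s i != 0 by rewrite /fill_zeros; case: ifPn.
pose t := qtorus (fill_zeros x s).
have t_neq0 k : t k != 0 by apply/prodf_neq0 => i _; exact: expfz_neq0.
have orbit_chart := chart_pt_orbit sigmaSig t_neq0.
exists t; split=> //; exists (orbit_pt b sigma t); split.
- exact: chart_pt_subset sigma_S SSig orbit_chart.
- by exists (orbit_pt b sigma t); rewrite (setIidPr sigma_S).
- suff -> : evalf f (orbit_pt b sigma t) = P.[s] by [].
  rewrite P_eval; apply: eq_bigr => c _.
  by rewrite /orbit_pt /t chi_qtorus // mulrAC mulrA.
Qed.

Lemma Ltilde_iff_VItilde : inLtilde b Sig sigma x <-> in_VItilde b Sig sigma x.
Proof.
split=> [/Ltilde_sub_min_cone|/VItilde_sub_min_cone]; first exact: sub_min_cone_VItilde.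
exact: sub_min_cone_Ltilde.
Qed.

End MinCone.

End Fan.

Theorem proposition3p7 (d n : nat) (b : 'I_n -> lat d) (Sig : {set {set 'I_n}})
    (sigma : {set 'I_n}) :
  is_fan b Sig -> sigma \in Sig ->
  forall x : 'I_n -> CCC, inXtilde Sig x ->
    (inLtilde b Sig sigma x <-> in_VItilde b Sig sigma x).
Proof.
move=> Hfan sigmaSig x xX.
have [tau [tauSig zeros_tau tau_min]] := Xtilde_min_cone Hfan xX.
exact (Ltilde_iff_VItilde Hfan sigmaSig tauSig zeros_tau tau_min).
Qed.
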